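(* For every integer $n\ge2$, the $n$-th Bernoulli number satisfies $B_n=(-1)^n\,q_{n-1}(1)\,n!$.
   Context: The Bernoulli numbers $B_n$ are defined by $\frac{z}{e^z-1}=\sum_{n\ge0}\frac{B_n}{n!}z^n$ for $|z|<2\pi$. The polynomials $p_j,q_j$ ($j\ge1$) are defined recursively by $p_1(x)=\frac{x-x^2}{2}$, $q_j(x)=\int_0^xp_j(t)\,dt$, and $p_{j+1}(x)=q_j(x)-x\,q_j(1)$. *)

From Stdlib Require Import Reals Arith Factorial.
From Coquelicot Require Import Coquelicot.
Open Scope R_scope.

(* The paper's polynomials, as real functions.
   p j = p_j for j >= 1 (p 0 is an unused dummy value).
   p_1(x) = (x - x^2)/2,  q_j(x) = int_0^x p_j,  p_{j+1}(x) = q_j(x) - x q_j(1). *)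
Fixpoint p (j : nat) : R -> R :=
  match j with
  | O => fun _ => 0
  | S O => fun x => (x - x ^ 2) / 2
  | S j' => fun x => RInt (p j') 0 x - x * RInt (p j') 0 1
  end.

Definition q (j : nat) (x : R) : R := RInt (p j) 0 x.

Definition is_bernoulli_seq (B : nat -> R) : Prop :=
  forall z : R, 0 < Rabs z < 2 * PI ->
    is_series (fun n => B n / INR (fact n) * z ^ n) (z / (exp z - 1)).

From Stdlib Require Import Reals Arith Factorial Lra Lia.
From Coquelicot Require Import Coquelicot.
Open Scope R_scope.

(* Write b_n = B_n / n! and f(z) = z / (e^z - 1) = sum_n b_n z^n.  The proof
   has three parts.
   1. Power series: two series with the same value on a punctured disc and the
      same constant term have the same coefficients (identity theorem).
   2. Coefficient identities for b: the reflection law f(-z) = f(z) + z gives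
      (-1)^n b_n = b_n + [n = 1], and f(z) e^z = f(z) + z gives, through the
      Cauchy product, sum_(k<=n) b_k / (n-k)! = b_n + [n = 1].
   3. Polynomials: for any sequence c obeying the second identity,
      p_j(x) = - sum_(k<=j) c_k x^(j-k+1) / (j-k+1)!  by induction on j, using
      term-by-term integration of monomials; evaluating its antiderivative at 1
      and using the identity at n = j + 2 yields q_j(1) = c_(j+1).
   With c = b, q_(n-1)(1) = b_n, and the parity identity removes the sign. *)

Lemma pseries_radius_ge (c : nat -> R) (x : R) :
  ex_series (fun n => c n * x ^ n) -> Rbar_le (Rabs x) (CV_radius c).
Proof.
  intros Hx. apply Rbar_not_lt_le. intros Hlt.
  apply (CV_disk_outside c x Hlt). now apply ex_series_lim_0.
Qed.

(* Convergence at y gives absolute convergence strictly inside |y|; this is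
   what the Cauchy product theorem requires. *)
Lemma pseries_abs_conv (c : nat -> R) (x y : R) :
  Rabs x < Rabs y -> ex_series (fun n => c n * y ^ n) ->
  ex_series (fun n => Rabs (c n * x ^ n)).
Proof.
  intros Hxy Hy. apply CV_disk_inside.
  exact (Rbar_lt_le_trans (Rabs x) (Rabs y) _ Hxy (pseries_radius_ge c y Hy)).
Qed.

Lemma pseries_coef_eq (c d : nat -> R) (g : R -> R) (r : R) :
  0 < r -> c 0%nat = d 0%nat ->
  (forall x, 0 < Rabs x < r ->
     is_series (fun n => c n * x ^ n) (g x) /\ is_series (fun n => d n * x ^ n) (g x)) ->
  forall n, c n = d n.
Proof.
  intros Hr H0 Hcd n.
  assert (Hhalf : 0 < Rabs (r / 2) < r) by (rewrite Rabs_pos_eq; lra).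
  destruct (Hcd _ Hhalf) as [Hc Hd].
  assert (Hpos : 0 < Rabs (r / 2)) by lra.
  apply PSeries_ext_recip.
  - exact (Rbar_lt_le_trans 0 (Rabs (r / 2)) _ Hpos (pseries_radius_ge c _ (ex_intro _ _ Hc))).
  - exact (Rbar_lt_le_trans 0 (Rabs (r / 2)) _ Hpos (pseries_radius_ge d _ (ex_intro _ _ Hd))).
  - exists (mkposreal r Hr). intros x Hx.
    change (Rabs (x - 0) < r) in Hx. rewrite Rminus_0_r in Hx.
    destruct (Req_dec x 0) as [->|Hx0].
    + now rewrite !PSeries_0.
    + assert (Hx' : 0 < Rabs x < r) by (split; [apply Rabs_pos_lt|]; assumption).
      destruct (Hcd x Hx') as [Hcx Hdx].
      rewrite (is_pseries_unique c x (g x)), (is_pseries_unique d x (g x));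
        [reflexivity | apply is_pseries_R; assumption ..].
Qed.

Definition delta1 (n : nat) : R := if Nat.eqb n 1 then 1 else 0.

Lemma is_series_delta1 (x : R) : is_series (fun n => delta1 n * x ^ n) x.
Proof.
  apply (filterlim_ext_loc (fun _ => x)); [|apply filterlim_const].
  exists 1%nat. intros k Hk.
  induction k as [|k IH]; [lia|].
  rewrite sum_Sn. destruct k as [|k].
  - rewrite sum_O. unfold plus, delta1; simpl. ring.
  - rewrite <- IH by lia. unfold plus, delta1; simpl. ring.
Qed.

Lemma exp_minus_1_neq_0 (x : R) : x <> 0 -> exp x - 1 <> 0.
Proof.
  intros Hx He. apply Hx, exp_inv. rewrite exp_0. lra.
Qed.

Lemma bernoulli_gf_reflect (x : R) : x <> 0 ->
  - x / (exp (- x) - 1) = x / (exp x - 1) + x.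
Proof.
  intros Hx. pose proof (exp_minus_1_neq_0 x Hx). pose proof (exp_pos x).
  rewrite exp_Ropp. replace (/ exp x - 1) with ((1 - exp x) / exp x) by (field; lra).
  field. split; lra.
Qed.

Section BernoulliCoefficients.
Variable B : nat -> R.
Hypothesis HB : is_bernoulli_seq B.

Definition bcoef (n : nat) : R := B n / INR (fact n).

(* The defining expansion, on a disc small enough to avoid the poles at +-2 pi i. *)
Lemma bernoulli_series (x : R) : 0 < Rabs x < 4 ->
  is_series (fun n => bcoef n * x ^ n) (x / (exp x - 1)).
Proof. intros Hx. apply HB. pose proof PI2_1. lra. Qed.

Lemma bernoulli_series_plus_id (x : R) : 0 < Rabs x < 2 ->
  is_series (fun n => (bcoef n + delta1 n) * x ^ n) (x / (exp x - 1) + x).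
Proof.
  intros Hx.
  apply (is_series_ext (fun n => plus (bcoef n * x ^ n) (delta1 n * x ^ n))).
  - intros n. unfold plus; simpl. ring.
  - exact (is_series_plus _ _ _ _ (bernoulli_series x ltac:(lra)) (is_series_delta1 x)).
Qed.

(* From f(-z) = f(z) + z: (-1)^n b_n = b_n + [n = 1]. *)
Lemma bernoulli_parity (n : nat) : bcoef n * (-1) ^ n = bcoef n + delta1 n.
Proof.
  revert n.
  apply (pseries_coef_eq (fun n => bcoef n * (-1) ^ n) (fun n => bcoef n + delta1 n)
           (fun x => x / (exp x - 1) + x) 2); [lra | unfold delta1; simpl; ring |].
  intros x Hx. assert (Hx0 : x <> 0) by (intros ->; rewrite Rabs_R0 in Hx; lra).
  split; [|exact (bernoulli_series_plus_id x Hx)].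
  rewrite <- (bernoulli_gf_reflect x Hx0).
  apply (is_series_ext (fun n => bcoef n * (- x) ^ n)).
  - intros n. replace (- x) with ((-1) * x) by ring. rewrite Rpow_mult_distr. simpl. ring.
  - apply bernoulli_series. rewrite Rabs_Ropp. lra.
Qed.

(* From f(z) e^z = f(z) + z, via the Cauchy product of the two series:
   sum_(k<=n) b_k / (n-k)! = b_n + [n = 1]. *)
Lemma bernoulli_convolution (n : nat) :
  sum_f_R0 (fun k => bcoef k / INR (fact (n - k))) n = bcoef n + delta1 n.
Proof.
  revert n.
  apply (pseries_coef_eq (fun n => sum_f_R0 (fun k => bcoef k / INR (fact (n - k))) n)
           (fun n => bcoef n + delta1 n) (fun x => x / (exp x - 1) + x) 2);
    [lra | unfold delta1; simpl; field |].
  intros x Hx. assert (Hx0 : x <> 0) by (intros ->; rewrite Rabs_R0 in Hx; lra).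
  split; [|exact (bernoulli_series_plus_id x Hx)].
  assert (Hx3 : Rabs x < Rabs 3) by (rewrite (Rabs_pos_eq 3); lra).
  assert (Ha3 := bernoulli_series 3 ltac:(rewrite Rabs_pos_eq; lra)).
  assert (He := proj1 (is_pseries_R _ _ _) (is_exp_Reals x)).
  assert (He3 := proj1 (is_pseries_R _ _ _) (is_exp_Reals 3)).
  assert (Hprod := is_series_mult _ _ _ _ (bernoulli_series x ltac:(lra)) He
    (pseries_abs_conv _ x 3 Hx3 (ex_intro _ _ Ha3))
    (pseries_abs_conv _ x 3 Hx3 (ex_intro _ _ He3))).
  replace (x / (exp x - 1) + x) with (x / (exp x - 1) * exp x)
    by (pose proof (exp_minus_1_neq_0 x Hx0); field; assumption).
  revert Hprod. apply is_series_ext. intros n.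
  rewrite Rmult_comm, scal_sum. apply sum_eq. intros k Hk.
  replace (x ^ n) with (x ^ k * x ^ (n - k)) by (rewrite <- pow_add; f_equal; lia).
  unfold Rdiv. ring.
Qed.
End BernoulliCoefficients.

Definition mono (m : nat) (x : R) : R := x ^ m / INR (fact m).

Lemma is_derive_mono (m : nat) (t : R) : is_derive (mono (S m)) t (mono m t).
Proof.
  unfold mono. rewrite fact_simpl, mult_INR.
  pose proof (INR_fact_neq_0 m). pose proof (not_0_INR (S m) (Nat.neq_succ_0 m)).
  set (r := INR (fact m)). set (s := INR (S m)).
  auto_derive; [exact I|].
  change (match m with 0%nat => 1 | S _ => INR m + 1 end) with (INR (S m)).
  fold s. field. split; assumption.
Qed.

Lemma is_RInt_mono (m : nat) (x : R) : is_RInt (mono m) 0 x (mono (S m) x).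
Proof.
  replace (mono (S m) x) with (minus (mono (S m) x) (mono (S m) 0)).
  - apply (is_RInt_derive (mono (S m)) (mono m)); intros t _.
    + exact (is_derive_mono m t).
    + apply (ex_derive_continuous (mono m)). unfold mono. auto_derive. exact I.
  - assert (H0 : mono (S m) 0 = 0) by (unfold mono; rewrite pow_i by lia; apply Rdiv_0_l).
    rewrite H0. exact (minus_zero_r (mono (S m) x)).
Qed.

Lemma is_RInt_sum_f_R0 (f : nat -> R -> R) (I : nat -> R) (u v : R) (N : nat) :
  (forall k, is_RInt (f k) u v (I k)) ->
  is_RInt (fun t => sum_f_R0 (fun k => f k t) N) u v (sum_f_R0 I N).
Proof.
  intros HI. induction N as [|N IH]; simpl.
  - apply HI.
  - exact (is_RInt_plus _ _ _ _ _ _ IH (HI (S N))).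
Qed.

Section GeneratingPolynomials.
Variable c : nat -> R.
Hypothesis Hconv : forall n,
  sum_f_R0 (fun k => c k / INR (fact (n - k))) n = c n + delta1 n.

Lemma coef_0 : c 0%nat = 1.
Proof. pose proof (Hconv 1). unfold delta1 in *; simpl in *. lra. Qed.

Lemma coef_1 : c 1%nat = - 1 / 2.
Proof. pose proof (Hconv 2). pose proof coef_0. unfold delta1 in *; simpl in *. lra. Qed.

Definition Ppoly (j : nat) (x : R) : R := - sum_f_R0 (fun k => c k * mono (S (j - k)) x) j.
Definition Qpoly (j : nat) (x : R) : R := - sum_f_R0 (fun k => c k * mono (S (S (j - k))) x) j.

Lemma is_RInt_Ppoly (j : nat) (x : R) : is_RInt (Ppoly j) 0 x (Qpoly j x).
Proof.
  apply (is_RInt_opp (fun t => sum_f_R0 (fun k => c k * mono (S (j - k)) t) j)).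
  apply (is_RInt_sum_f_R0 (fun k t => c k * mono (S (j - k)) t)).
  intros k. apply (is_RInt_scal (mono (S (j - k)))). apply is_RInt_mono.
Qed.

Lemma Qpoly_at_1 (j : nat) : Qpoly j 1 = c (S j).
Proof.
  pose proof (Hconv (S (S j))) as H. unfold delta1 in H; simpl Nat.eqb in H.
  rewrite !tech5 in H.
  replace (S (S j) - S j)%nat with 1%nat in H by lia.
  replace (S (S j) - S (S j))%nat with 0%nat in H by lia.
  change (INR (fact 1)) with 1 in H. change (INR (fact 0)) with 1 in H.
  unfold Qpoly. rewrite (sum_eq _ (fun k => c k / INR (fact (S (S j) - k)))).
  - unfold Rdiv in *. rewrite Rinv_1 in H. lra.
  - intros k Hk. unfold mono. rewrite pow1.
    replace (S (S j) - k)%nat with (S (S (j - k))) by lia. unfold Rdiv. ring.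
Qed.

Lemma p_closed_form (j : nat) : forall x, p (S j) x = Ppoly (S j) x.
Proof.
  induction j as [|j IH]; intros x.
  - change (p 1 x) with ((x - x ^ 2) / 2).
    unfold Ppoly, mono. cbn [sum_f_R0 Nat.sub]. rewrite coef_0, coef_1.
    change (INR (fact 2)) with 2. change (INR (fact 1)) with 1. field.
  - change (p (S (S j)) x) with (RInt (p (S j)) 0 x - x * RInt (p (S j)) 0 1).
    rewrite !(RInt_ext (p (S j)) (Ppoly (S j))) by (intros; apply IH).
    rewrite !(is_RInt_unique _ _ _ _ (is_RInt_Ppoly (S j) _)), Qpoly_at_1.
    unfold Ppoly, Qpoly. rewrite (tech5 _ (S j)).
    replace (S (S j) - S (S j))%nat with 0%nat by lia.
    rewrite (sum_eq (fun k => c k * mono (S (S (S j) - k)) x)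
                    (fun k => c k * mono (S (S (S j - k))) x)).
    + unfold mono. change (INR (fact 1)) with 1. cbn [pow]. field.
    + intros k Hk. do 3 f_equal. lia.
Qed.

Lemma q_at_1 (j : nat) : q (S j) 1 = c (S (S j)).
Proof.
  unfold q. rewrite (RInt_ext _ (Ppoly (S j))) by (intros; apply p_closed_form).
  rewrite (is_RInt_unique _ _ _ _ (is_RInt_Ppoly (S j) 1)). apply Qpoly_at_1.
Qed.
End GeneratingPolynomials.

(* With c = b, q_(n-1)(1) = b_n; for n >= 2 the sign (-1)^n acts trivially on b_n. *)
Theorem corollary9 (B : nat -> R) (HB : is_bernoulli_seq B) (n : nat) (hn : (2 <= n)%nat) :
  B n = (-1) ^ n * q (n - 1) 1 * INR (fact n).
Proof.
  destruct n as [|[|m]]; try lia.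
  replace (S (S m) - 1)%nat with (S m) by lia.
  rewrite (q_at_1 (bcoef B) (bernoulli_convolution B HB) m).
  assert (Hsign : (-1) ^ S (S m) * bcoef B (S (S m)) = bcoef B (S (S m))).
  { rewrite Rmult_comm, (bernoulli_parity B HB). unfold delta1. cbn [Nat.eqb]. ring. }
  rewrite Hsign. unfold bcoef. field. apply INR_fact_neq_0.
Qed.
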